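(* For every $m\in\mathbb N$ there exist $L_3(m)\in\mathbb N$ and $K_3(m)\in\mathbb N$ such that whenever $\varepsilon_1,\dots,\varepsilon_m\in\{\pm1\}$ and $i_1,\dots,i_m>K_3(m)$ are integers, then either $$\varepsilon_1a_{i_1}+\dots+\varepsilon_ma_{i_m}=\varepsilon_1\eta^{i_1}+\dots+\varepsilon_m\eta^{i_m}=0,$$ or $$|\varepsilon_1a_{i_1}+\dots+\varepsilon_ma_{i_m}|\ge\eta^{\min\{i_1,\dots,i_m\}-L_3(m)}.$$ Moreover, $L_3(m)$ and $K_3(m)$ can be chosen to be increasing in $m$.
   Context: Standing setting: $d\in\mathbb N$; $\lambda_1,\dots,\lambda_d\in\mathbb C$ are the roots of an irreducible polynomial of degree $d$ with integer coefficients; $c_1,\dots,c_d\in\mathbb C$; the dominant root condition holds: $\lambda_1$ is real, $\lambda_1>1$, $\lambda_1>\max\{|\lambda_2|,\dots,|\lambda_d|\}$, $c_1\ne0$; $a_n=c_1\lambda_1^n+\dots+c_d\lambda_d^n$ is a positive integer for every $n\in\mathbb N$; and $\eta:=\lambda_1$. *)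

From mathcomp Require Import all_boot all_order all_algebra.
From mathcomp Require Import reals complex.
Set Implicit Arguments. Unset Strict Implicit. Unset Printing Implicit Defensive.
Import Order.TTheory GRing.Theory Num.Theory.
Local Open Scope ring_scope.

(* a_k = c_1 lam_1^k + ... + c_n lam_n^k (indices shifted to 0 .. n-1). *)
Definition lrs (R : realType) (n : nat) (c lam : 'I_n -> R[i]) (k : nat) : R[i] :=
  \sum_(j < n) c j * lam j ^+ k.

(* min{i_1,...,i_m} (for m = 0 this is 0; irrelevant for the statement). *)
Definition min_idx (m : nat) (i : 'I_m -> nat) : nat :=
  \big[minn/(\max_(j < m) i j)%N]_(j < m) i j.

From mathcomp Require Import all_boot all_order all_algebra.
From mathcomp Require Import reals complex.
From mathcomp Require Import zify ring lra.
From Stdlib Require Import IndefiniteDescription.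
Import Order.TTheory GRing.Theory Num.Theory Normc.
Local Open Scope ring_scope.
Local Open Scope complex_scope.

(* Write a_n = c_1 eta^n + r_n with |r_n| <= B rho^n for some rho < eta, put
   S = sum_j eps_j a_(i_j), and let h be the largest exponent i_j.  For increasing levels
   0 = G_0 <= G_1 <= ..., the m windows [h - G_(t+1), h - G_t), t < m, cannot all contain
   one of the fewer than m other exponents; take an empty one.  The exponents above it
   form a cluster whose eta-sum is eta^(h - G_t) V, where V ranges over finitely many
   values.  If V <> 0, then |V| is bounded below and, the gap G_(t+1) - G_t being chosen
   large enough, the cluster dominates both the remainders r_n (for h large) and all the
   terms below the window, so |S| >= eta^(h - L).  If V = 0, the cluster's eta-sum is the
   value at eta of a polynomial with integer coefficients, which then vanishes at every
   conjugate lambda_k of eta as well; hence the cluster's a-sum vanishes too, and we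
   recurse on the terms below the window. *)

Section ComplexNorm.
Context {R : rcfType}.
Implicit Types (x y : R[i]) (r : R).

Lemma normc_ge0 x : 0 <= normc x.
Proof. exact: (@normr_ge0 _ (Rcomplex R)). Qed.

Lemma normcX x n : normc (x ^+ n) = normc x ^+ n.
Proof. by elim: n => [|n IH]; rewrite ?normc1 // !exprS normcM IH. Qed.

Lemma normc_real r : normc r%:C = `|r|.
Proof. by rewrite /normc /= expr0n /= addr0 sqrtr_sqr. Qed.

Lemma normc_int (z : int) : normc (z%:~R : R[i]) = `|z|%:~R.
Proof. by rewrite -(rmorph_int (real_complex R)) normc_real intr_norm. Qed.

Lemma normc_sum {I : finType} (P : pred I) (F : I -> R[i]) :
  normc (\sum_(j | P j) F j) <= \sum_(j | P j) normc (F j).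
Proof. exact: (@ler_norm_sum _ (Rcomplex R)). Qed.

Lemma lerB_normcD x y : normc x - normc y <= normc (x + y).
Proof. exact: (@lerB_normD _ (Rcomplex R)). Qed.

Lemma exprz_le_normc (b : R) (z : R[i]) (n L : nat) : 0 < b ->
  b ^+ n <= normc z * b ^+ L -> Complex (b ^ (n%:Z - L%:Z)) 0 <= `|z|.
Proof.
move=> b_gt0 le_bz; rewrite complexr0 lecR expfzDr ?gt_eqF // -exprnN -exprnP.
by rewrite ler_pdivrMr ?exprn_gt0.
Qed.

End ComplexNorm.

Section PowerGrowth.
Context {R : archiRealFieldType}.
Implicit Types x r X Y : R.

Lemma bernoulli_ineq {x} n : 1 <= x -> 1 + n%:R * (x - 1) <= x ^+ n.
Proof.
move=> x_ge1; elim: n => [|n IH]; first by rewrite mul0r addr0 expr0.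
rewrite exprS -natr1.
have : 0 <= (x - 1) * (x ^+ n - (1 + n%:R * (x - 1))) by rewrite mulr_ge0 ?subr_ge0.
have : 0 <= n%:R * ((x - 1) * (x - 1)) by rewrite !mulr_ge0 ?ler0n ?subr_ge0.
nra.
Qed.

Lemma exprn_unbounded {x} X : 1 < x -> exists n, X <= x ^+ n.
Proof.
move=> x_gt1; have x1_gt0 : 0 < x - 1 by rewrite subr_gt0.
have /archi_boundP : 0 <= `|X| / (x - 1) by rewrite divr_ge0 ?normr_ge0 ?ltW.
set n := Num.Def.archi_bound _; rewrite ltr_pdivrMr // => lt_Xn; exists n.
have := bernoulli_ineq n (ltW x_gt1).
have := ler_norm X; lra.
Qed.

Lemma exprn_dominates r x X Y : 0 < r -> r < x -> 0 < Y ->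
  exists N, forall h, (N <= h)%N -> X * r ^+ h <= Y * x ^+ h.
Proof.
move=> r_gt0 lt_rx Y_gt0; have xr_gt1 : 1 < x / r by rewrite ltr_pdivlMr // mul1r.
have [N le_XN] := exprn_unbounded (X / Y) xr_gt1.
exists N => h le_Nh; have := le_trans le_XN (ler_weXn2l (ltW xr_gt1) le_Nh).
by rewrite expr_div_n ler_pdivrMr // mulrC mulrA ler_pdivlMr ?exprn_gt0.
Qed.

End PowerGrowth.

Section NonzeroLowerBound.
Context {R : numFieldType} {F : finType} (v : F -> R).

(* Zero values of [v] do not contribute to the sum, because [0^-1 = 0]. *)
Definition nonzero_lb : R := (1 + \sum_x `|v x|^-1)^-1.

Lemma nonzero_lb_gt0 : 0 < nonzero_lb.
Proof.
by rewrite invr_gt0 ltr_pwDl // sumr_ge0 // => x _; rewrite invr_ge0.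
Qed.

Lemma nonzero_lb_le x : v x != 0 -> nonzero_lb <= `|v x|.
Proof.
move=> vx_neq0; have inv_ge0 y : 0 <= `|v y|^-1 by rewrite invr_ge0.
rewrite -[`|v x|]invrK lef_pV2 ?posrE ?invr_gt0 ?normr_gt0 ?ltr_pwDl ?sumr_ge0 //.
by rewrite (bigD1 x) //= addrCA lerDl addr_ge0 ?sumr_ge0.
Qed.

End NonzeroLowerBound.

Lemma uniform_threshold (P : nat -> nat -> Prop) M :
  (forall t N N', (N <= N')%N -> P t N -> P t N') -> (forall t, exists N, P t N) ->
  exists N, forall t, (t <= M)%N -> P t N.
Proof.
move=> P_mono P_ex; elim: M => [|M [N PN]].
  by have [N PN] := P_ex 0%N; exists N => t; rewrite leqn0 => /eqP ->.
have [N' PN'] := P_ex M.+1; exists (maxn N N') => t; rewrite leq_eqVlt => /orP[/eqP ->|].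
  exact: P_mono (leq_maxr _ _) PN'.
by rewrite ltnS => le_tM; apply: P_mono (leq_maxl _ _) (PN t le_tM).
Qed.

Lemma empty_window m (Z : {set 'I_m}) (f : 'I_m -> nat) (G : nat -> nat) h n :
  {homo G : s t / (s <= t)%N} -> (#|Z| < n)%N ->
  exists2 t, (t < n)%N & forall j, j \in Z -> ~~ (h - G t.+1 <= f j < h - G t)%N.
Proof.
move=> G_mono lt_Zn.
case: (boolP [exists t : 'I_n, [forall j in Z, ~~ (h - G t.+1 <= f j < h - G t)%N]]).
  by case/existsP => t /forall_inP window_t; exists t.
rewrite negb_exists => /forallP full.
have /fin_all_exists [pick pickP] :
    forall t : 'I_n, exists j, (j \in Z) && (h - G t.+1 <= f j < h - G t)%N.
  by move=> t; have /forall_inPn [j jZ hj] := full t; exists j; rewrite jZ -[_ && _]negbK.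
have pick_neq (s t : 'I_n) : (s < t)%N -> pick s != pick t.
  move=> lt_st; apply/eqP => eq_st; have /andP[_] := pickP s; have /andP[_] := pickP t.
  by rewrite -eq_st; have := G_mono _ _ lt_st; lia.
have pick_inj : injective pick.
  move=> s t eq_st; apply: val_inj; case: (ltngtP s t) => // [lt_st|lt_ts].
    by have := pick_neq _ _ lt_st; rewrite eq_st eqxx.
  by have := pick_neq _ _ lt_ts; rewrite eq_st eqxx.
suff : (n <= #|Z|)%N by rewrite leqNgt lt_Zn.
rewrite -[n in (n <= _)%N]card_ord -(card_imset _ pick_inj); apply: subset_leq_card.
by apply/subsetP => _ /imsetP[t _ ->]; case/andP: (pickP t).
Qed.

Lemma ex_increasing_bounds (P : nat -> nat -> nat -> Prop) :
  (forall m, exists L K, forall L' K', (L <= L')%N -> (K <= K')%N -> P m L' K') ->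
  exists L3 K3 : nat -> nat,
    [/\ {homo L3 : x y / (x < y)%N}, {homo K3 : x y / (x < y)%N} & forall m, P m (L3 m) (K3 m)].
Proof.
move=> P_ex.
have /functional_choice [LK LKP] : forall m, exists LK : nat * nat,
    forall L' K', (LK.1 <= L')%N -> (LK.2 <= K')%N -> P m L' K'.
  by move=> m; have [L [K PLK]] := P_ex m; exists (L, K).
pose acc (f : nat -> nat) m := (\sum_(k < m.+1) (f k).+1)%N.
have acc_homo f : {homo acc f : x y / (x < y)%N}.
  apply: homo_ltn => [y x z|k]; first exact: ltn_trans.
  by rewrite /acc [in X in (_ < X)%N]big_ord_recr /= -[X in (X < _)%N]addn0 ltn_add2l.
have acc_ge f m : (f m <= acc f m)%N.
  by rewrite /acc big_ord_recr /= (leq_trans (leqnSn _)) ?leq_addl.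
exists (acc (fun k => (LK k).1)), (acc (fun k => (LK k).2)).
by split=> // m; apply: LKP; apply: acc_ge.
Qed.

Section LinearCombination.
Context {V : pzRingType} {m : nat}.
Implicit Types (e : 'I_m -> int) (i : 'I_m -> nat) (f : nat -> V) (P : pred 'I_m).

Definition lincomb e i f : V := \sum_(j < m) (e j)%:~R * f (i j).

Definition restrict P e j : int := if P j then e j else 0.

Definition support e : {set 'I_m} := [set j | e j != 0].

Lemma lincomb_restrict P e i f :
  lincomb e i f = lincomb (restrict P e) i f + lincomb (restrict (predC P) e) i f.
Proof.
rewrite /lincomb -big_split; apply: eq_bigr => j _ /=.
by rewrite /restrict /=; case: (P j); rewrite /= mul0r ?addr0 ?add0r.
Qed.

Lemma lincomb_support0 e i f : support e = set0 -> lincomb e i f = 0.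
Proof.
move=> supp0; apply: big1 => j _.
have : j \notin support e by rewrite supp0 inE.
by rewrite inE negbK => /eqP ->; rewrite mul0r.
Qed.

End LinearCombination.

Lemma root_conjugates {R : rcfType} {d : nat} {lam : 'I_d -> R[i]} {p q : {poly int}} {k} :
  irreducible_poly (map_poly (intr : int -> rat) p) ->
  map_poly (intr : int -> R[i]) p = (lead_coef p)%:~R *: \prod_(j < d) ('X - (lam j)%:P) ->
  root (map_poly (intr : int -> R[i]) q) (lam k) ->
  forall l, root (map_poly (intr : int -> R[i]) q) (lam l).
Proof.
move=> p_irr p_roots q_root l.
have map_ratr r : map_poly ratr (map_poly (intr : int -> rat) r) = map_poly (intr : int -> R[i]) r.
  by rewrite -map_poly_comp; apply: eq_map_poly => z /=; rewrite ratr_int.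
have p_root l' : root (map_poly (intr : int -> R[i]) p) (lam l').
  by rewrite /root p_roots hornerZ horner_prod (bigD1 l') //= hornerXsubC subrr mul0r mulr0.
set g := gcdp (map_poly (intr : int -> rat) p) (map_poly intr q).
have g_root : root (map_poly ratr g) (lam k) by rewrite gcdp_map root_gcd !map_ratr p_root.
have g_size : size g != 1%N.
  apply/negP => /size_poly1P [c c_neq0 gE].
  by move: g_root; rewrite gE map_polyC /root hornerC fmorph_eq0 (negbTE c_neq0).
have p_dvd_q : map_poly (intr : int -> rat) p %| map_poly intr q.
  by rewrite -(eqp_dvdl _ (apply_irredp p_irr g_size (dvdp_gcdl _ _))) dvdp_gcdr.
move: p_dvd_q; rewrite -(dvdp_map (ratr : {rmorphism rat -> R[i]})) !map_ratr.
by move/root_dvdp; apply.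
Qed.

Section GapPrinciple.
Context {R : realType} {a : nat -> R[i]} {c0 : R[i]} {eta rho B : R}.
Hypothesis eta_gt1 : 1 < eta.
Hypothesis rho_ge1 : 1 <= rho.
Hypothesis rho_lt_eta : rho < eta.
Hypothesis c0_neq0 : c0 != 0.

Local Notation power := (fun n : nat => eta ^+ n).

Hypothesis a_dominant : forall n, normc (a n - c0 * (eta ^+ n)%:C) <= B * rho ^+ n.
Hypothesis a_conjugate_vanishing : forall m (e : 'I_m -> int) i,
  lincomb e i power = 0 -> lincomb e i a = 0.

Let eta_ge1 : 1 <= eta. Proof. exact: ltW. Qed.
Let power_gt0 n : 0 < eta ^+ n. Proof. exact/exprn_gt0/(lt_trans ltr01 eta_gt1). Qed.
Let c0_gt0 : 0 < normc c0.
Proof. by rewrite lt_def normc_ge0 andbT; apply: contra c0_neq0 => /eqP/eq0_normc ->. Qed.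

Let B_ge0 : 0 <= B.
Proof. by have := a_dominant 0; rewrite !expr0 mulr1; apply: le_trans; apply: normc_ge0. Qed.

Definition growth_const : R := normc c0 + B.

Let growth_const_ge0 : 0 <= growth_const.
Proof. by rewrite addr_ge0 ?normc_ge0 ?B_ge0. Qed.

Lemma normc_a_le n : normc (a n) <= growth_const * eta ^+ n.
Proof.
have := le_normcD (c0 * (eta ^+ n)%:C) (a n - c0 * (eta ^+ n)%:C).
rewrite addrC subrK normcM normc_real ger0_norm ?(ltW (power_gt0 n)) // => le_a.
apply: le_trans le_a _; rewrite mulrDl lerD2l; apply: le_trans (a_dominant n) _.
rewrite ler_wpM2l ?B_ge0 //.
by apply: lerXn2r; rewrite ?nnegrE ?(le_trans ler01) // ltW.
Qed.

Section FixedLength.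
Variable m : nat.
Implicit Types (e : 'I_m -> int) (i : 'I_m -> nat).

Lemma normc_lincomb_le e i (f : nat -> R[i]) M : 0 <= M -> (forall j, `|e j| <= 1) ->
  (forall j, e j != 0 -> normc (f (i j)) <= M) -> normc (lincomb e i f) <= m%:R * M.
Proof.
move=> M_ge0 e_le1 f_le; apply: le_trans (normc_sum _ _) _.
rewrite -[m in m%:R]card_ord mulr_natl -sumr_const; apply: ler_sum => j _.
have [->|ej] := eqVneq (e j) 0; first by rewrite mul0r normc0.
rewrite normcM normc_int -[M]mul1r ler_pM ?normc_ge0 ?f_le //.
by rewrite lerz1 e_le1.
Qed.

Lemma normc_lincomb_a_le e i u : (forall j, `|e j| <= 1) ->
  (forall j, e j != 0 -> (i j <= u)%N) -> normc (lincomb e i a) <= m%:R * (growth_const * eta ^+ u).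
Proof.
move=> e_le1 i_le; apply: normc_lincomb_le => // [|j ej].
  by rewrite mulr_ge0 ?growth_const_ge0 ?(ltW (power_gt0 u)).
apply: le_trans (normc_a_le _) _; rewrite ler_wpM2l ?growth_const_ge0 //.
exact: ler_weXn2l eta_ge1 _ _ (i_le j ej).
Qed.

Lemma normc_lincomb_a_ge e i h : (forall j, `|e j| <= 1) -> (forall j, e j != 0 -> (i j <= h)%N) ->
  normc c0 * `|lincomb e i power| - m%:R * (B * rho ^+ h) <= normc (lincomb e i a).
Proof.
move=> e_le1 i_le.
have -> : lincomb e i a =
    c0 * (lincomb e i power)%:C + lincomb e i (fun n => a n - c0 * (eta ^+ n)%:C).
  rewrite /lincomb rmorph_sum mulr_sumr -big_split; apply: eq_bigr => j _ /=.
  by rewrite rmorphM rmorph_int; ring.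
apply: le_trans (lerB_normcD _ _); rewrite normcM normc_real lerD2l lerN2.
apply: normc_lincomb_le => // [|j ej].
  by rewrite mulr_ge0 ?B_ge0 ?exprn_ge0 // (le_trans ler01).
apply: le_trans (a_dominant _) _; rewrite ler_wpM2l ?B_ge0 //.
exact: ler_weXn2l rho_ge1 _ _ (i_le j ej).
Qed.


(* All sums [V] of [m] terms [e * eta^k] with [e] in {-1, 0, 1}, encoded as [s - 1] for
   [s : 'I_3], and [k <= G]. *)
Definition cluster_value {G} (g : {ffun 'I_m -> 'I_3 * 'I_G.+1}) : R :=
  \sum_j (((g j).1 : nat)%:Z - 1)%:~R * eta ^+ (g j).2.

Definition kappa G : R := normc c0 * nonzero_lb (@cluster_value G).

Lemma kappa_gt0 G : 0 < kappa G.
Proof. by rewrite mulr_gt0 ?nonzero_lb_gt0. Qed.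

Lemma kappa_le_cluster e i b G : (forall j, `|e j| <= 1) ->
  (forall j, e j != 0 -> (b <= i j <= b + G)%N) -> lincomb e i power != 0 ->
  kappa G * eta ^+ b <= normc c0 * `|lincomb e i power|.
Proof.
move=> e_le1 i_in T_neq0.
pose g := [ffun j => (inord (absz (e j + 1)%R), inord (i j - b)) : 'I_3 * 'I_G.+1].
have Tg : lincomb e i power = eta ^+ b * cluster_value g.
  rewrite /lincomb /cluster_value mulr_sumr; apply: eq_bigr => j _; rewrite ffunE /=.
  have := e_le1 j; have [->|ej] := eqVneq (e j) 0 => [_|e_le1j].
    by rewrite inordK //= !mul0r mulr0.
  have /andP[le_bi le_iG] := i_in j ej.
  rewrite !inordK; [|lia|lia]; rewrite mulrCA -exprD subnKC //.
  by congr (_%:~R * _); lia.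
have V_neq0 : cluster_value g != 0 by apply: contraNneq T_neq0; rewrite Tg => ->; rewrite mulr0.
rewrite Tg normrM ger0_norm ?(ltW (power_gt0 b)) // /kappa -mulrA ler_wpM2l ?normc_ge0 //.
by rewrite mulrC ler_wpM2l ?(ltW (power_gt0 b)) // nonzero_lb_le.
Qed.

Lemma gap_ex G : exists n, 4 * m%:R * growth_const <= kappa G * eta ^+ n.
Proof.
have [n le_n] := exprn_unbounded (4 * m%:R * growth_const / kappa G) eta_gt1.
by exists n; rewrite -ler_pdivrMl ?kappa_gt0 // mulrC.
Qed.

Definition gap G := xchoose (gap_ex G).

Lemma gapP G : 4 * m%:R * growth_const <= kappa G * eta ^+ gap G.
Proof. exact: xchooseP (gap_ex G). Qed.

Definition level t := iter t (fun G => G + gap G)%N 0%N.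

Lemma level_mono : {homo level : s t / (s <= t)%N}.
Proof. by apply: homo_leq => [//|y x z|t]; [exact: leq_trans | exact: leq_addr]. Qed.

Section Thresholds.
Variables K1 L0 : nat.
Hypothesis remainder_small : forall t, (t <= m)%N -> forall h, (K1 <= h)%N ->
  4 * m%:R * B * eta ^+ level t * rho ^+ h <= kappa (level t) * eta ^+ h.
Hypothesis kappa_large : forall t, (t <= m)%N -> 2 <= kappa (level t) * eta ^+ L0.

Lemma separated_lower_bound t h eH eL i : (t < m)%N -> (maxn K1 (level m) < h)%N ->
  (forall j, `|eH j| <= 1) -> (forall j, `|eL j| <= 1) ->
  (forall j, eH j != 0 -> (h - level t <= i j <= h)%N) ->
  (forall j, eL j != 0 -> (i j <= h - level t.+1)%N) ->
  lincomb eH i power != 0 ->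
  eta ^+ h <= normc (lincomb eH i a + lincomb eL i a) * eta ^+ (L0 + level m).
Proof.
move=> lt_tm; rewrite gtn_max => /andP[/ltnW le_K1h lt_levm_h] eH_le1 eL_le1 eH_i eL_i TH_neq0.
have le_lev_t_m := level_mono _ _ (ltnW lt_tm).
have le_lev_t1_m : (level t.+1 <= level m)%N := level_mono _ _ lt_tm.
set k := kappa (level t); set X := eta ^+ (h - level t); set W := eta ^+ (h - level t.+1).
have TH_ge : k * X <= normc c0 * `|lincomb eH i power|.
  by apply: kappa_le_cluster => // j /eH_i; rewrite subnK //; lia.
have SH_ge := normc_lincomb_a_ge eH i h eH_le1 (fun j ej => proj2 (andP (eH_i j ej))).
have SL_le : normc (lincomb eL i a) <= m%:R * (growth_const * W) :=
  normc_lincomb_a_le eL i _ eL_le1 eL_i.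
have gap_le : 4 * (m%:R * (growth_const * W)) <= k * X.
  have XWF : X = W * eta ^+ gap (level t).
    have lev_S : level t.+1 = (level t + gap (level t))%N by [].
    by rewrite /X /W -exprD; congr (_ ^+ _); lia.
  have := ler_wpM2r (ltW (power_gt0 (h - level t.+1))) (gapP (level t)).
  by rewrite -/k -/W XWF !mulrA [k * _ * _]mulrAC.
have rem_le : 4 * m%:R * B * rho ^+ h <= k * X.
  have := remainder_small t (ltnW lt_tm) h le_K1h.
  rewrite -[in X in _ <= X](subnK (ltnW (leq_ltn_trans le_lev_t_m lt_levm_h))) exprD -/X -/k.
  by rewrite mulrA mulrAC ler_pM2r ?power_gt0.
have S_ge := lerB_normcD (lincomb eH i a) (lincomb eL i a).
have S_ge_half : k * X <= 2 * normc (lincomb eH i a + lincomb eL i a) by lra.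
have X_le : X <= normc (lincomb eH i a + lincomb eL i a) * eta ^+ L0.
  rewrite -(ler_pM2l (@ltr0Sn R 1)).
  apply: le_trans (ler_wpM2r (ltW (power_gt0 _)) (kappa_large t (ltnW lt_tm))) _.
  by rewrite -/X -/k mulrAC mulrA ler_pM2r ?power_gt0.
have h_le : eta ^+ h <= X * eta ^+ level m.
  rewrite -[in X in X <= _](subnK (ltnW (leq_ltn_trans le_lev_t_m lt_levm_h))) exprD -/X.
  by rewrite ler_wpM2l ?(ltW (power_gt0 _)) // ler_weXn2l.
apply: le_trans h_le _; rewrite exprD mulrA ler_wpM2r ?(ltW (power_gt0 _)) //.
Qed.

Lemma gap_principle_support n e i n0 : (#|support e| <= n)%N -> (forall j, `|e j| <= 1) ->
  (forall j, e j != 0 -> (maxn K1 (level m) < i j)%N /\ (n0 <= i j)%N) ->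
  (lincomb e i a = 0 /\ lincomb e i power = 0) \/
  eta ^+ n0 <= normc (lincomb e i a) * eta ^+ (L0 + level m).
Proof.
elim: n e => [|n IH] e supp_le e_le1 e_i.
  by left; rewrite !lincomb_support0 //; apply/eqP; rewrite -cards_eq0 -leqn0.
have [supp0|[js]] := set_0Vmem (support e); first by left; rewrite !lincomb_support0.
rewrite inE => ejs; case: (@arg_maxnP _ js (fun j => e j != 0) i ejs) => {ejs}js ejs i_le_js.
set h := i js; have [lt_K_h le_n0_h] := e_i js ejs.
have [|t lt_tm window_t] := @empty_window _ (support e :\ js) i level h m level_mono.
  by have := max_card (support e); rewrite (cardsD1 js) inE ejs card_ord add1n.
pose H j := (h - level t <= i j)%N.
rewrite (lincomb_restrict H e i a) (lincomb_restrict H e i power).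
have restrict_le1 P j : `|restrict P e j| <= 1 by rewrite /restrict; case: (P j).
have [TH0|TH_neq0] := eqVneq (lincomb (restrict H e) i power) 0.
  rewrite TH0 (a_conjugate_vanishing _ _ _ TH0) !add0r; apply: IH => // [|j].
    rewrite -ltnS; apply: leq_trans supp_le; apply: proper_card; apply/properP; split.
      by apply/subsetP => j; rewrite !inE /restrict /=; case: (H j).
    by exists js; rewrite !inE /restrict /= ?ejs // /H leq_subr.
  by rewrite /restrict /=; case: (H j) => //= /e_i.
right; apply: le_trans (ler_weXn2l eta_ge1 le_n0_h) _.
apply: (separated_lower_bound _ _ _ _ _ lt_tm lt_K_h (restrict_le1 H) (restrict_le1 (predC H)))
  => // j.
  by rewrite /restrict; case: ifP => // Hj ej; rewrite [(_ <= i j)%N]Hj; exact: i_le_js.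
rewrite /restrict /=; case: ifP => // nHj ej; move: nHj; rewrite /H -ltnNge => lt_ij.
have [eq_j|neq_j] := eqVneq j js; first by move: lt_ij; rewrite eq_j ltnNge leq_subr.
have := window_t j; rewrite !inE neq_j ej lt_ij => /(_ isT).
by rewrite andbT -ltnNge => /ltnW.
Qed.

End Thresholds.

Lemma gap_principle : exists L K, forall e i n0, (forall j, `|e j| <= 1) ->
  (forall j, e j != 0 -> (K < i j)%N /\ (n0 <= i j)%N) ->
  (lincomb e i a = 0 /\ lincomb e i power = 0) \/
  eta ^+ n0 <= normc (lincomb e i a) * eta ^+ L.
Proof.
have [K1 remainder_small] : exists K1, forall t, (t <= m)%N -> forall h, (K1 <= h)%N ->
    4 * m%:R * B * eta ^+ level t * rho ^+ h <= kappa (level t) * eta ^+ h.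
  apply: uniform_threshold => [t N N' le_NN' small_N h le_N'h|t].
    exact: small_N (leq_trans le_NN' le_N'h).
  by apply: exprn_dominates (kappa_gt0 _) => //; apply: lt_le_trans ltr01 rho_ge1.
have [L0 kappa_large] : exists L0, forall t, (t <= m)%N -> 2 <= kappa (level t) * eta ^+ L0.
  apply: uniform_threshold => [t L L' le_LL' large_L|t].
    by apply: le_trans large_L _; rewrite ler_wpM2l ?(ltW (kappa_gt0 _)) // ler_weXn2l.
  have [L le_L] := exprn_unbounded (2 / kappa (level t)) eta_gt1.
  by exists L; rewrite -ler_pdivrMl ?kappa_gt0 // mulrC.
exists (L0 + level m)%N, (maxn K1 (level m)) => e i n0 e_le1 e_i.
apply: (@gap_principle_support K1 L0 remainder_small kappa_large m) e_le1 e_i.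
by rewrite -[m in (_ <= m)%N]card_ord max_card.
Qed.

End FixedLength.
End GapPrinciple.

Section LinearRecurrence.
Context {R : realType} {d : nat} {c lam : 'I_d.+1 -> R[i]} {p : {poly int}}.
Hypothesis p_irr : irreducible_poly (map_poly (fun z : int => z%:~R : rat) p).
Hypothesis p_roots : map_poly (fun z : int => z%:~R : R[i]) p
  = (lead_coef p)%:~R *: \prod_(j < d.+1) ('X - (lam j)%:P).
Hypothesis lam0_real : complex.Im (lam ord0) = 0.
Hypothesis eta_gt1 : 1 < complex.Re (lam ord0).
Hypothesis lam_dominant :
  forall j : 'I_d.+1, j != ord0 -> `|lam j| < Complex (complex.Re (lam ord0)) 0.
Hypothesis c0_neq0 : c ord0 != 0.

Local Notation eta := (complex.Re (lam ord0)).

Lemma lam0E : lam ord0 = eta%:C.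
Proof. by move: lam0_real; case: (lam ord0) => x y /= ->. Qed.

Lemma lrs_conjugate_vanishing m (e : 'I_m -> int) i :
  lincomb e i (fun n => eta ^+ n) = 0 -> lincomb e i (lrs c lam) = 0.
Proof.
move=> T0; pose q : {poly int} := \sum_(j < m) (e j)%:P * 'X^(i j).
have q_eval x : (map_poly (intr : int -> R[i]) q).[x] = lincomb e i (fun n => x ^+ n).
  rewrite rmorph_sum horner_sum; apply: eq_bigr => j _.
  by rewrite rmorphM /= map_polyC map_polyXn hornerCM hornerXn.
have q_root l : root (map_poly (intr : int -> R[i]) q) (lam l).
  apply: (root_conjugates (k := ord0) p_irr p_roots); rewrite /root q_eval lam0E.
  suff -> : lincomb e i (fun n => eta%:C ^+ n) = (lincomb e i (fun n => eta ^+ n))%:C by rewrite T0.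
  by rewrite /lincomb rmorph_sum; apply: eq_bigr => j _; rewrite rmorphM rmorph_int rmorphXn.
rewrite /lincomb /lrs; under eq_bigr do rewrite mulr_sumr; rewrite exchange_big /=.
apply: big1 => l _; transitivity (c l * lincomb e i (fun n => lam l ^+ n)).
  by rewrite /lincomb mulr_sumr; apply: eq_bigr => j _; rewrite mulrCA.
by rewrite -q_eval (eqP (q_root l)) mulr0.
Qed.

Lemma normc_lam_lt l : l != ord0 -> normc (lam l) < eta.
Proof. by move/lam_dominant; rewrite ltcE /= => /andP[]. Qed.

Lemma lrs_dominant : exists rho B, [/\ 1 <= rho, rho < eta &
  forall n, normc (lrs c lam n - c ord0 * (eta ^+ n)%:C) <= B * rho ^+ n].
Proof.
pose rho := \big[Num.max/1]_(l | l != ord0) normc (lam l).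
have rho_ge1 : 1 <= rho := bigmax_ge_id _ _ _ _.
exists rho, (\sum_(l | l != ord0) normc (c l)); split=> // [|n].
  by apply: bigmax_lt => // l /normc_lam_lt.
rewrite /lrs (bigD1 ord0) //= lam0E -rmorphXn addrAC subrr add0r.
apply: le_trans (normc_sum _ _) _; rewrite mulr_suml; apply: ler_sum => l l0.
rewrite normcM normcX ler_wpM2l ?normc_ge0 //; apply: lerXn2r; rewrite ?nnegrE ?normc_ge0 //.
  exact: le_trans ler01 rho_ge1.
exact: le_bigmax_cond.
Qed.

Lemma min_idx_le m (i : 'I_m -> nat) j : (min_idx i <= i j)%N.
Proof. exact: (@bigmin_le _ nat _ _ j i). Qed.

Lemma lrs_gap m : exists L K, forall L' K', (L <= L')%N -> (K <= K')%N ->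
  forall (eps : 'I_m -> int) (i : 'I_m -> nat),
    (forall j, eps j = 1 \/ eps j = -1) -> (forall j, (K' < i j)%N) ->
    (lincomb eps i (lrs c lam) = 0 /\ lincomb eps i (fun n => eta ^+ n) = 0) \/
    eta ^+ min_idx i <= normc (lincomb eps i (lrs c lam)) * eta ^+ L'.
Proof.
have [rho [B [rho_ge1 rho_lt_eta lrs_dom]]] := lrs_dominant.
have [L [K gap]] :=
  gap_principle eta_gt1 rho_ge1 rho_lt_eta c0_neq0 lrs_dom lrs_conjugate_vanishing m.
exists L, K => L' K' le_LL' le_KK' eps i eps_pm1 i_gt.
have eps_le1 j : `|eps j| <= 1 by case: (eps_pm1 j) => ->.
have [j _|zero|bound] := gap eps i (min_idx i) eps_le1; [|by left|right].
  by split; [exact: leq_ltn_trans le_KK' (i_gt j) | exact: min_idx_le].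
exact: le_trans bound (ler_wpM2l (normc_ge0 _) (ler_weXn2l (ltW eta_gt1) le_LL')).
Qed.

End LinearRecurrence.

Theorem lemma6p4 (R : realType) (d : nat) (c lam : 'I_d.+1 -> R[i])
  (p : {poly int})
  (Hsize : size p = d.+2)
  (Hirr : irreducible_poly (map_poly (fun z : int => z%:~R : rat) p))
  (Hroots : map_poly (fun z : int => z%:~R : R[i]) p
            = (lead_coef p)%:~R *: \prod_(j < d.+1) ('X - (lam j)%:P))
  (Hreal : complex.Im (lam ord0) = 0)
  (Heta1 : 1 < complex.Re (lam ord0))
  (Hdom : forall j : 'I_d.+1, j != ord0 -> `|lam j| < Complex (complex.Re (lam ord0)) 0)
  (Hc1 : c ord0 != 0)
  (Hpos : forall n : nat, (0 < n)%N ->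
            exists k : nat, (0 < k)%N /\ lrs c lam n = k%:R) :
  exists L3 K3 : nat -> nat,
    {homo L3 : a b / (a < b)%N >-> (a < b)%N} /\
    {homo K3 : a b / (a < b)%N >-> (a < b)%N} /\
    forall (m : nat) (eps : 'I_m -> int) (i : 'I_m -> nat),
      (forall j, eps j = 1 \/ eps j = -1) ->
      (forall j, (K3 m < i j)%N) ->
      (\sum_(j < m) (eps j)%:~R * lrs c lam (i j) = 0 /\
       \sum_(j < m) (eps j)%:~R * complex.Re (lam ord0) ^+ i j = 0 :> R)
      \/
      (Complex (complex.Re (lam ord0) ^ ((min_idx i)%:Z - (L3 m)%:Z)) 0
         <= `|\sum_(j < m) (eps j)%:~R * lrs c lam (i j)|).
Proof.
have [L3 [K3 [L3_homo K3_homo bound]]] :=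
  ex_increasing_bounds _ (lrs_gap Hirr Hroots Hreal Heta1 Hdom Hc1).
exists L3, K3; do 2!split=> //; move=> m eps i eps_pm1 i_gt.
have [zero|ge] := bound m eps i eps_pm1 i_gt; [by left | right].
exact: exprz_le_normc (lt_trans ltr01 Heta1) ge.
Qed.
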